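(* Let $k>1$ be an integer and $L\in\mathcal L_k$. Then the automorphism group of the subgraph of $\mathcal F_k$ induced on $\phi_k^{-1}(L)$ is uncountable.
   Context: The vertex set $V$ consists of all reduced fractions $p/q$ with $p,q\in\mathbb Z$, $\gcd(p,q)=1$, together with $1/0$; here $p/q$ and $(-p)/(-q)$ denote the same vertex. For vertices define $d(p/q,a/b)=|pb-qa|$. The graph $\mathcal F_k$ has vertex set $V$, with an edge between $p/q$ and $a/b$ exactly when $d(p/q,a/b)=k$. An element $(a,b)\in(\mathbb Z/k\mathbb Z)^2$ is admissible if for $\lambda\in\mathbb Z/k\mathbb Z$, $(\lambda a,\lambda b)=0$ implies $\lambda=0$; $\mathcal L_k$ is the set of admissible elements modulo $v\sim\lambda v$ for units $\lambda\in(\mathbb Z/k\mathbb Z)^*$; $\phi_k:V\to\mathcal L_k$ sends $p/q$ to the class of $(p\bmod k,q\bmod k)$. *)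

From HB Require Import structures.
From mathcomp Require Import all_boot all_algebra.
Set Implicit Arguments. Unset Strict Implicit. Unset Printing Implicit Defensive.
Import GRing.Theory Num.Theory.
Local Open Scope ring_scope.

(* Vertices: reduced fractions p/q (gcd(p,q)=1), including 1/0, with p/q and
   (-p)/(-q) identified.  We use the canonical representative with q > 0,
   or (p,q) = (1,0) for the vertex 1/0. *)
Definition is_vertex (pq : int * int) : bool :=
  coprimez pq.1 pq.2 && ((0 < pq.2) || (pq == (1, 0))).

Definition V := {pq : int * int | is_vertex pq}.

Definition vnum (v : V) : int := (sval v).1.
Definition vden (v : V) : int := (sval v).2.

Definition dist (v w : V) : int := `|vnum v * vden w - vden v * vnum w|.

Definition Fk_adj (k : nat) (v w : V) : Prop := dist v w = k%:Z.

Definition admissible (k : nat) (a b : 'Z_k) : Prop :=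
  forall lam : 'Z_k, lam * a = 0 -> lam * b = 0 -> lam = 0.

(* phi_k v equals the class of the admissible pair (a,b) in L_k, i.e.
   (p mod k, q mod k) = lam (a,b) for some unit lam of Z/kZ.  (Independent of
   the sign of the representative, since -1 is a unit.) *)
Definition in_fiber (k : nat) (a b : 'Z_k) (v : V) : Prop :=
  exists2 lam : 'Z_k, lam \is a GRing.unit &
    ((vnum v)%:~R = lam * a /\ (vden v)%:~R = lam * b).

Arguments in_fiber : clear implicits.
Arguments admissible : clear implicits.

Definition fiber (k : nat) (a b : 'Z_k) := {v : V | in_fiber k a b v}.
Arguments fiber : clear implicits.

Definition is_fiber_aut (k : nat) (a b : 'Z_k) (f : fiber k a b -> fiber k a b) : Prop :=
  bijective f /\
  forall x y : fiber k a b, Fk_adj k (sval x) (sval y) <-> Fk_adj k (sval (f x)) (sval (f y)).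
Arguments is_fiber_aut : clear implicits.

From HB Require Import structures.
From mathcomp Require Import all_boot all_order all_algebra.
From mathcomp Require Import zify ring.
From Stdlib Require Import ProofIrrelevance.
Set Implicit Arguments. Unset Strict Implicit. Unset Printing Implicit Defensive.
Import Order.TTheory GRing.Theory Num.Theory.

(* Lift L to a primitive vector w0 and complete it to a basis (w0, w1) of Z^2
   of determinant 1.  In the coordinates (y1, y2) of this basis the distance
   d is still |det|, and every vertex of the fiber over L has k | y2.  For
   each n, the integral reflection y1/y2 |-> 2n+1 - y1/y2 of the interval
   (n, n+1) preserves the fiber and fixes the vertex L itself (y2 = 0).  A
   fiber vertex of slope in (n, n+1) is adjacent to no fiber vertex of slope
   outside [n, n+1] with y2 <> 0, since then |det| >= |y2| + |y2'| >= 2k; and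
   no fiber vertex has integral slope, as it would have |y2| = 1 < k.  Hence
   for every set A of naturals, reflecting all intervals (n, n+1) with n in A at
   once is an automorphism of the fiber.  Given a sequence e of automorphisms,
   the set A of those n for which e n fixes the vertex of coordinates
   (k^2 n + 1, k^2) yields an automorphism that differs from every e n. *)

Local Open Scope ring_scope.

Definition det2 (x y : int * int) : int := x.1 * y.2 - x.2 * y.1.

Lemma det2C x y : det2 y x = - det2 x y.
Proof. by rewrite /det2; ring. Qed.

Lemma normr_det2C x y : `|det2 y x| = `|det2 x y|.
Proof. by rewrite det2C normrN. Qed.

Lemma det2Nl x y : det2 (- x) y = - det2 x y.
Proof. by rewrite /det2 /=; ring. Qed.

Lemma det2Nr x y : det2 x (- y) = - det2 x y.
Proof. by rewrite /det2 /=; ring. Qed.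

Lemma normr_det2_pm x x' y y' :
  x' = x \/ x' = - x -> y' = y \/ y' = - y -> `|det2 x' y'| = `|det2 x y|.
Proof. by case=> ->; case=> ->; rewrite ?det2Nl ?det2Nr ?opprK ?normrN. Qed.

Definition primitive (x : int * int) : bool := coprimez x.1 x.2.

Lemma primitiveN x : primitive (- x) = primitive x.
Proof. by rewrite /primitive /= coprimeNz coprimezN. Qed.

Lemma primitive_comb x y a1 b1 a2 b2 :
  x.1 = a1 * y.1 + b1 * y.2 -> x.2 = a2 * y.1 + b2 * y.2 ->
  primitive x -> primitive y.
Proof.
move=> h1 h2 /coprimezP [[u v] /= huv]; apply/coprimezP.
exists (u * a1 + v * a2, u * b1 + v * b2) => /=.
by rewrite -huv h1 h2; ring.
Qed.

Lemma primitive_mul_eq c x : primitive x -> x.1 = c * x.2 -> `|x.2| = 1.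
Proof.
rewrite /primitive => + hx; rewrite hx coprimezMl => /andP[_].
by rewrite coprimezE /coprime gcdnn => /eqP h; rewrite -abszE h.
Qed.

(** * Unit intervals and their mirrors *)

(* [in_interval n y] says n < y.1 / y.2 < n + 1, with the denominator cleared. *)
Definition in_interval (n : nat) (y : int * int) : bool :=
  (n%:Z * (y.2 * y.2) < y.1 * y.2) && (y.1 * y.2 < n.+1%:Z * (y.2 * y.2)).

Lemma in_intervalN n y : in_interval n (- y) = in_interval n y.
Proof. by rewrite /in_interval /= !mulrNN. Qed.

Lemma in_interval_neq0 n y : in_interval n y -> y.2 != 0.
Proof.
case: y => p q /andP[h1 h2]; apply/eqP => /= q0.
by move: h1 h2; rewrite q0 !mulr0; lia.
Qed.

Definition interval_index (y : int * int) : nat :=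
  `|((y.1 * y.2) %/ (y.2 * y.2))%Z|%N.

Lemma interval_indexP n y : in_interval n y -> interval_index y = n.
Proof.
move=> hy; have /andP[h1 h2] := hy; have q0 := in_interval_neq0 hy.
rewrite /interval_index; set Q := y.2 * y.2 in h1 h2 *; set P := y.1 * y.2 in h1 h2 *.
have Q0 : 0 < Q by rewrite /Q; nia.
have -> : P = n%:Z * Q + (P - n%:Z * Q) by ring.
rewrite divzMDl ?lt0r_neq0 //.
have -> : ((P - n%:Z * Q) %/ Q)%Z = 0 by apply: divz_small; lia.
by rewrite addr0.
Qed.

Lemma in_interval_uniq n n' y : in_interval n y -> in_interval n' y -> n = n'.
Proof. by move=> /interval_indexP <- /interval_indexP. Qed.

Definition mirror (n : nat) (y : int * int) : int * int :=
  ((2 * n%:Z + 1) * y.2 - y.1, y.2).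

Lemma mirrorK n : involutive (mirror n).
Proof. by case=> p q; rewrite /mirror /=; congr pair; ring. Qed.

Lemma mirrorN n y : mirror n (- y) = - mirror n y.
Proof. by apply: injective_projections => /=; ring. Qed.

Lemma det2_mirror n y z : det2 (mirror n y) (mirror n z) = - det2 y z.
Proof. by rewrite /det2 /mirror /=; ring. Qed.

Lemma primitive_mirror n y : primitive (mirror n y) = primitive y.
Proof.
have comb y' : primitive y' -> primitive (mirror n y').
  by apply: (@primitive_comb _ _ (-1) (2 * n%:Z + 1) 0 1);
    rewrite /mirror /=; ring.
by apply/idP/idP => [/comb|/comb //]; rewrite mirrorK.
Qed.

Lemma in_interval_mirror n y : in_interval n (mirror n y) = in_interval n y.
Proof.
case: y => p q; rewrite /in_interval /mirror /=.
set N := n%:Z; set Q := q * q; set P := p * q.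
have -> : ((2 * N + 1) * q - p) * q = 2 * (N * Q) + Q - P by rewrite /Q /P; ring.
have -> : n.+1%:Z * Q = N * Q + Q by rewrite /N -addn1 PoszD; ring.
by apply/andP/andP => -[h1 h2]; split; lia.
Qed.

Lemma mirror_pm_eq n y : mirror n y = y \/ mirror n y = - y ->
  y.2 = 0 \/ 2 * y.1 = (2 * n%:Z + 1) * y.2.
Proof.
case: y => p q; rewrite /mirror => -[/pair_equal_spec[e _]|/pair_equal_spec[_ e]] /=.
  by right; move: e => /=; lia.
by left; move: e => /=; lia.
Qed.

Lemma pm_pos (x : int * int) : x.2 != 0 -> exists2 x', 0 < x'.2 & x = x' \/ x = - x'.
Proof.
move=> x0; have [xpos|xneg] := boolP (0 < x.2); first by exists x; [|left].
by exists (- x); [rewrite /=; lia | right; rewrite opprK].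
Qed.

Lemma det2_gap_pos n y z : 0 < y.2 -> 0 < z.2 ->
  in_interval n y -> ~~ in_interval n z -> primitive z -> 1 < z.2 ->
  y.2 + z.2 <= `|det2 y z|.
Proof.
case: y z => p1 q1 [p2 q2] /= q1pos q2pos /andP[h1 h2] hz pz q2gt1.
have lo1 : n%:Z * q1 < p1 by rewrite -(ltr_pM2r q1pos) -mulrA.
have hi1 : p1 < n.+1%:Z * q1 by rewrite -(ltr_pM2r q1pos) -mulrA.
have off_ends (c : int) : p2 != c * q2.
  by apply/eqP => e; have := primitive_mul_eq pz e; rewrite /= gtr0_norm //; lia.
have /eqP ne1 := off_ends n%:Z; have /eqP ne2 := off_ends n.+1%:Z.
rewrite /det2 /=; case/nandP: hz; rewrite mulrA ltr_pM2r // -leNgt /= => hz.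
- have lo2 : p2 < n%:Z * q2 by lia.
  have : q1 + q2 <= p1 * q2 - q1 * p2 by nia.
  lia.
- have hi2 : n.+1%:Z * q2 < p2 by lia.
  have : q1 + q2 <= q1 * p2 - p1 * q2 by nia.
  lia.
Qed.

Lemma det2_gap n y z : in_interval n y -> ~~ in_interval n z ->
  primitive z -> 1 < `|z.2| -> `|y.2| + `|z.2| <= `|det2 y z|.
Proof.
move=> hy hz pz z2.
have [y' y'pos ey] := pm_pos (in_interval_neq0 hy).
have [z' z'pos ez] : exists2 z', 0 < z'.2 & z = z' \/ z = - z'.
  by apply: pm_pos; apply: contraTneq z2 => ->.
have norm2 (x x' : int * int) : x = x' \/ x = - x' -> `|x.2| = `|x'.2|.
  by case=> -> //=; rewrite normrN.
rewrite (normr_det2_pm ey ez) (norm2 _ _ ey) (norm2 _ _ ez) in z2 *.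
rewrite (gtr0_norm y'pos) (gtr0_norm z'pos) in z2 *; apply: (det2_gap_pos (n := n)) => //.
- by case: ey hy => ->; rewrite ?in_intervalN.
- by case: ez hz => ->; rewrite ?in_intervalN.
- by case: ez pz => ->; rewrite ?primitiveN.
Qed.

Lemma dvdz_norm_ge (k : nat) (q : int) : (k %| q)%Z -> q != 0 -> k%:Z <= `|q|.
Proof.
move=> /dvdn_leq kq q0; rewrite -abszE lez_nat; apply: kq.
by rewrite absz_gt0.
Qed.

(** * Coordinates in a unimodular basis *)

Section Basis.

Variables w0 w1 : int * int.
Hypothesis det_w : det2 w0 w1 = 1.

Definition coord (x : int * int) : int * int := (det2 x w1, det2 w0 x).

Definition uncoord (y : int * int) : int * int :=
  (y.1 * w0.1 + y.2 * w1.1, y.1 * w0.2 + y.2 * w1.2).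

Lemma mul_det_w (t : int) : det2 w0 w1 * t = t.
Proof. by rewrite det_w mul1r. Qed.

Lemma coordK : cancel coord uncoord.
Proof.
move=> x; apply: injective_projections => /=.
  by rewrite -[in RHS](mul_det_w x.1) /det2; ring.
by rewrite -[in RHS](mul_det_w x.2) /det2; ring.
Qed.

Lemma uncoordK : cancel uncoord coord.
Proof.
move=> y; apply: injective_projections => /=.
  by rewrite -[in RHS](mul_det_w y.1) /det2 /=; ring.
by rewrite -[in RHS](mul_det_w y.2) /det2 /=; ring.
Qed.

Lemma coordN x : coord (- x) = - coord x.
Proof. by apply: injective_projections; rewrite /= ?det2Nl ?det2Nr. Qed.

Lemma det2_coord x y : det2 (coord x) (coord y) = det2 x y.
Proof. by rewrite -[in RHS](mul_det_w (det2 x y)) /coord /det2 /=; ring. Qed.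

Lemma primitive_coord x : primitive (coord x) = primitive x.
Proof.
apply/idP/idP => px.
  by apply: (primitive_comb (a1 := w1.2) (b1 := - w1.1) (a2 := - w0.2) (b2 := w0.1)
                            _ _ px); rewrite /= /det2; ring.
rewrite -(coordK x) in px.
by apply: (primitive_comb (a1 := w0.1) (b1 := w1.1) (a2 := w0.2) (b2 := w1.2) _ _ px);
  rewrite /=; ring.
Qed.

Definition flip (n : nat) (x : int * int) : int * int := uncoord (mirror n (coord x)).

Lemma coord_flip n x : coord (flip n x) = mirror n (coord x).
Proof. exact: uncoordK. Qed.

Lemma flipK n : involutive (flip n).
Proof. by move=> x; rewrite /flip uncoordK mirrorK coordK. Qed.

Lemma flipN n x : flip n (- x) = - flip n x.
Proof.
apply: (can_inj coordK); rewrite coord_flip !coordN coord_flip.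
exact: mirrorN.
Qed.

Lemma det2_flip n x y : det2 (flip n x) (flip n y) = - det2 x y.
Proof. by rewrite -det2_coord !coord_flip det2_mirror det2_coord. Qed.

Lemma primitive_flip n x : primitive (flip n x) = primitive x.
Proof. by rewrite -primitive_coord coord_flip primitive_mirror primitive_coord. Qed.

Lemma in_interval_flip n x : in_interval n (coord (flip n x)) = in_interval n (coord x).
Proof. by rewrite coord_flip in_interval_mirror. Qed.

Lemma flip_axis n x : (coord x).2 = 0 -> flip n x = - x.
Proof.
move=> x0; apply: (can_inj coordK); rewrite coord_flip coordN.
by case: (coord x) x0 => p q /= ->; apply: injective_projections => /=; ring.
Qed.

Lemma det2_flip_axis n x y : (coord y).2 = 0 -> det2 (flip n x) y = det2 x y.
Proof.
move=> y0.
by rewrite -[in LHS](flipK n y) det2_flip (flip_axis _ y0) det2Nr opprK.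
Qed.

Lemma flipE n x :
  flip n x = ((coord x).2 * ((2 * n%:Z + 1) * w0.1 + 2 * w1.1) - x.1,
              (coord x).2 * ((2 * n%:Z + 1) * w0.2 + 2 * w1.2) - x.2).
Proof.
rewrite /flip; move: (coordK x); case: (coord x) => p q <-.
by apply: injective_projections; rewrite /= ?uncoordK /=; ring.
Qed.

Lemma normr_det2_neq (k : nat) n x y : (1 < k)%N ->
  (k %| (coord x).2)%Z -> (k %| (coord y).2)%Z -> (coord y).2 != 0 ->
  in_interval n (coord x) -> ~~ in_interval n (coord y) -> primitive y ->
  `|det2 x y| != k%:Z.
Proof.
move=> k1 kx ky y0 hx hy py.
have kx' := dvdz_norm_ge kx (in_interval_neq0 hx); have ky' := dvdz_norm_ge ky y0.
have y1 : 1 < `|(coord y).2| by lia.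
have := det2_gap hx hy; rewrite primitive_coord det2_coord => /(_ py y1).
lia.
Qed.

Lemma flip_adj_out (k : nat) n x y : (1 < k)%N ->
  (k %| (coord x).2)%Z -> (k %| (coord y).2)%Z ->
  in_interval n (coord x) -> ~~ in_interval n (coord y) -> primitive y ->
  (`|det2 (flip n x) y| == k%:Z) = (`|det2 x y| == k%:Z).
Proof.
move=> k1 kx ky hx hy py; have [y0|y0] := eqVneq (coord y).2 0.
  by rewrite det2_flip_axis.
have kfx : (k %| (coord (flip n x)).2)%Z by rewrite coord_flip.
have hfx : in_interval n (coord (flip n x)) by rewrite in_interval_flip.
by rewrite !(negbTE (normr_det2_neq _ _ _ y0 _ hy py)).
Qed.

End Basis.

(** * Lifting admissible pairs *)

Local Close Scope ring_scope.

(* A prime dividing B divides exactly one of A and the pi(A)'-part of B. *)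
Lemma coprime_add_part (A B K : nat) : 0 < A -> 0 < B ->
  coprime (gcdn A B) K -> coprime (A + B`_(\pi(A))^' * K) B.
Proof.
move=> A0 B0 cK; set t := B`_(\pi(A))^'.
rewrite coprime_has_primes ?addn_gt0 ?A0 //; apply/hasPn => p.
rewrite !mem_primes => /and3P[pp _ pB]; rewrite pp addn_gt0 A0 /=.
have piA : (p \in \pi(A)) = (p %| A) by rewrite mem_primes pp A0.
have pt : (p %| t) = (p \notin \pi(A)).
  have := pi_of_part (\pi(A))^' B0 p.
  by rewrite !inE /= !mem_primes pp B0 pB part_gt0.
case pA : (p %| A).
- rewrite dvdn_addr // Euclid_dvdM // pt piA pA /=.
  by rewrite -prime_coprime // (coprime_dvdl _ cK) // dvdn_gcd pA.
- by rewrite dvdn_addl ?dvdn_mulr ?pt ?piA ?pA.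
Qed.

Local Open Scope ring_scope.

Lemma natr_Zp_eq0 m n : ((n%:R : 'Z_m.+2) == 0) = (m.+2 %| n)%N.
Proof. by rewrite -val_eqE /= val_Zp_nat. Qed.

Lemma intr_Zp_eq0 m (z : int) : ((z%:~R : 'Z_m.+2) == 0) = (m.+2 %| z)%Z.
Proof.
case: z => n; first by rewrite -pmulrn natr_Zp_eq0.
by rewrite NegzE intrN oppr_eq0 -pmulrn natr_Zp_eq0.
Qed.

Lemma admissible_coprime m (a b : 'Z_m.+2) : admissible m.+2 a b ->
  coprime (gcdn (a + m.+2) (b + m.+2)) m.+2.
Proof.
move=> adm; set k := m.+2; set g := gcdn (gcdn (a + k) (b + k)) k.
have gk : (g %| k)%N := dvdn_gcdr _ _.
have g0 : (0 < g)%N by rewrite gcdn_gt0 orbT.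
have kill (x : 'Z_k) : (g %| x + k)%N -> (k %/ g)%:R * x = 0.
  move=> gx; have xk : (x + k)%:R = x :> 'Z_k by rewrite natrD natr_Zp pchar_Zp ?addr0.
  apply/eqP; rewrite -[x in _ * x]xk -natrM natr_Zp_eq0.
  by rewrite mulnC (muln_divCA gx gk) dvdn_mulr.
have /eqP := adm _ (kill a (dvdn_trans (dvdn_gcdl _ _) (dvdn_gcdl _ _)))
                   (kill b (dvdn_trans (dvdn_gcdl _ _) (dvdn_gcdr _ _))).
rewrite natr_Zp_eq0 => /dvdn_leq; rewrite divn_gt0 // (dvdn_leq _ gk) // => /(_ isT) kle.
rewrite /coprime -/g eqn_leq g0 andbT leqNgt; apply/negP => g1.
by have := ltn_Pdiv g1 (isT : (0 < k)%N); rewrite ltnNge kle.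
Qed.

Lemma admissible_lift m (a b : 'Z_m.+2) : admissible m.+2 a b ->
  exists w0 : int * int, [/\ primitive w0, w0.1%:~R = a & w0.2%:~R = b].
Proof.
move=> /admissible_coprime cK; set k := m.+2 in cK *.
have natZ (n : nat) : n%:~R = n%:R :> 'Z_k by [].
exists (Posz (a + k + (b + k)`_(\pi(a + k))^' * k)%N, Posz (b + k)); split => /=.
- by rewrite /primitive coprimezE /= coprime_add_part ?addn_gt0 ?orbT.
- by rewrite natZ !natrD natrM pchar_Zp ?mulr0 ?addr0 ?natr_Zp.
- by rewrite natZ natrD pchar_Zp ?addr0 ?natr_Zp.
Qed.

Lemma primitive_completion w0 : primitive w0 -> exists w1, det2 w0 w1 = 1.
Proof.
by case/coprimezP => -[u v] /= huv; exists (- v, u); rewrite /det2 /= -huv; ring.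
Qed.

(** * Vertices as primitive vectors up to sign *)

Lemma is_vertexE y : is_vertex y = primitive y && ((0 < y.2) || (y == (1, 0))).
Proof. by []. Qed.

Lemma primitive_vertex (v : V) : primitive (sval v).
Proof. by case/andP: (svalP v). Qed.

Definition vertex_of (x : int * int) : V :=
  insubd (exist _ (1, 0) isT : V) (if 0 < x.2 then x else - x).

Lemma val_vertex_of x : primitive x -> sval (vertex_of x) = x \/ sval (vertex_of x) = - x.
Proof.
move=> px; rewrite /vertex_of val_insubd is_vertexE.
have [x2|x2] := boolP (0 < x.2); first by rewrite px x2; left.
rewrite primitiveN px /=; have [x2neg|x2pos] := boolP (0 < - x.2); first by right.
case: x px x2 x2pos => p q /= px x2 x2pos; have q0 : q = 0 by lia.
move: px; rewrite /primitive q0 coprimezE /coprime /= gcdn0 => /eqP p1.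
have [->|->] : p = 1 \/ p = -1 by lia.
  by left.
by right.
Qed.

Lemma val_inj_pm (v w : V) : sval v = sval w \/ sval v = - sval w -> v = w.
Proof.
case=> [|e]; first exact: val_inj.
have := svalP v; have := svalP w; rewrite e !is_vertexE.
case: (sval w) => p q /= /andP[_ hw] /andP[_ hv].
by exfalso; move: hw hv; rewrite !xpair_eqE /=; lia.
Qed.

(** * Reflections of the fiber over L *)

Section Fiber.

Variables (m : nat) (a b : 'Z_m.+2) (w0 w1 : int * int).
Local Notation k := m.+2.
Hypotheses (det_w : det2 w0 w1 = 1) (w0a : w0.1%:~R = a) (w0b : w0.2%:~R = b).

Definition in_fiber_vec (x : int * int) : Prop :=
  exists2 lam : 'Z_k, lam \is a GRing.unit & x.1%:~R = lam * a /\ x.2%:~R = lam * b.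

Local Notation coord := (coord w0 w1).
Local Notation flip := (flip w0 w1).

Lemma in_fiber_vecN x : in_fiber_vec x -> in_fiber_vec (- x).
Proof.
case=> lam ul [e1 e2]; exists (- lam); first by rewrite unitrN.
by rewrite !intrN e1 e2 !mulNr.
Qed.

Lemma dvdz_coord2 x : in_fiber_vec x -> (k %| (coord x).2)%Z.
Proof.
case=> lam _ [e1 e2]; rewrite -intr_Zp_eq0 /= /det2 intrB !intrM e1 e2 w0a w0b.
by apply/eqP; ring.
Qed.

Lemma in_fiber_vec_flip n x : in_fiber_vec x -> in_fiber_vec (flip n x).
Proof.
move=> fx; have /eqP s0 := intr_Zp_eq0 m (coord x).2; rewrite dvdz_coord2 // in s0.
have [lam ul [e1 e2]] := in_fiber_vecN fx; exists lam => //.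
by rewrite flipE //= !intrD !intrM s0 !mul0r !add0r.
Qed.

Local Notation fiber := (fiber k a b).

Definition vec (z : fiber) : int * int := sval (sval z).

Lemma vec_primitive z : primitive (vec z).
Proof. exact: primitive_vertex. Qed.

Lemma vec_in_fiber z : in_fiber_vec (vec z).
Proof. exact: svalP z. Qed.

Lemma vec_inj_pm z w : vec z = vec w \/ vec z = - vec w -> z = w.
Proof.
move=> /val_inj_pm; case: z w => [v fv] [w fw] /= e; subst w.
by rewrite (proof_irrelevance _ fv fw).
Qed.

Lemma Fk_adj_fiberE z w : Fk_adj k (sval z) (sval w) <-> `|det2 (vec z) (vec w)| == k%:Z.
Proof. exact: (rwP eqP). Qed.

Lemma in_fiber_vertex_of x :
  primitive x -> in_fiber_vec x -> in_fiber k a b (vertex_of x).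
Proof.
move=> px fx; rewrite /in_fiber /vnum /vden.
by case: (val_vertex_of px) => ->; last apply: in_fiber_vecN.
Qed.

Definition fiber_of x (px : primitive x) (fx : in_fiber_vec x) : fiber :=
  exist _ (vertex_of x) (in_fiber_vertex_of px fx).

Lemma vec_fiber_of x (px : primitive x) (fx : in_fiber_vec x) :
  vec (fiber_of px fx) = x \/ vec (fiber_of px fx) = - x.
Proof. exact: val_vertex_of. Qed.

Local Notation cvec z := (coord (vec z)).

Lemma primitive_flip_vec n z : primitive (flip n (vec z)).
Proof. by rewrite primitive_flip // vec_primitive. Qed.

Definition fflip n (z : fiber) : fiber :=
  fiber_of (primitive_flip_vec n z) (in_fiber_vec_flip n (vec_in_fiber z)).

Lemma vec_fflip n z :
  vec (fflip n z) = flip n (vec z) \/ vec (fflip n z) = - flip n (vec z).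
Proof. exact: vec_fiber_of. Qed.

Lemma in_interval_fflip n z : in_interval n (cvec (fflip n z)) = in_interval n (cvec z).
Proof.
by case: (vec_fflip n z) => ->; rewrite ?coordN ?in_intervalN in_interval_flip.
Qed.

Lemma fflipK n : involutive (fflip n).
Proof.
move=> z; apply: vec_inj_pm.
case: (vec_fflip n (fflip n z)) => ->; case: (vec_fflip n z) => ->;
  rewrite ?(flipN det_w) (flipK det_w) ?opprK; by [left | right].
Qed.

Lemma normr_det2_fflip n z w :
  `|det2 (vec (fflip n z)) (vec (fflip n w))| = `|det2 (vec z) (vec w)|.
Proof.
by rewrite (normr_det2_pm (vec_fflip n z) (vec_fflip n w)) det2_flip // normrN.
Qed.

Lemma fflip_adj_out n z w : in_interval n (cvec z) -> ~~ in_interval n (cvec w) ->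
  (`|det2 (vec (fflip n z)) (vec w)| == k%:Z) = (`|det2 (vec z) (vec w)| == k%:Z).
Proof.
move=> hz hw; rewrite (normr_det2_pm (vec_fflip n z) (or_introl erefl)).
have [kz kw] := (dvdz_coord2 (vec_in_fiber z), dvdz_coord2 (vec_in_fiber w)).
exact: flip_adj_out kz kw hz hw (vec_primitive w).
Qed.

Definition flip_on (A : pred nat) (z : fiber) : fiber :=
  let n := interval_index (cvec z) in
  if A n && in_interval n (cvec z) then fflip n z else z.

Variant flip_on_spec (A : pred nat) (z : fiber) : fiber -> Prop :=
  | FlipOnIn n of A n & in_interval n (cvec z) : flip_on_spec A z (fflip n z)
  | FlipOnOut of (forall n, A n -> ~~ in_interval n (cvec z)) : flip_on_spec A z z.

Lemma flip_onP A z : flip_on_spec A z (flip_on A z).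
Proof.
rewrite /flip_on; case: ifP => [/andP[An hz]|out]; first exact: FlipOnIn.
apply: FlipOnOut => n An; apply/negP => hz.
by move: out; rewrite (interval_indexP hz) An hz.
Qed.

Lemma flip_onK A : involutive (flip_on A).
Proof.
move=> z; case: (flip_onP A z) => [n An hz|out].
  have hz' : in_interval n (cvec (fflip n z)) by rewrite in_interval_fflip.
  case: (flip_onP A (fflip n z)) => [n' _ hn'|out'].
    by rewrite (in_interval_uniq hn' hz') fflipK.
  by rewrite (negPf (out' n An)) in hz'.
case: (flip_onP A z) => [n An hz|//].
by rewrite (negPf (out n An)) in hz.
Qed.

Lemma flip_on_adj A z w :
  (`|det2 (vec (flip_on A z)) (vec (flip_on A w))| == k%:Z) =
  (`|det2 (vec z) (vec w)| == k%:Z).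
Proof.
case: (flip_onP A z) => [n An hz|zout]; case: (flip_onP A w) => [n' An' hw|wout] //.
- have [<-|nn'] := eqVneq n n'; first by rewrite normr_det2_fflip.
  have hz' : in_interval n (cvec (fflip n z)) by rewrite in_interval_fflip.
  have hzn' : ~~ in_interval n' (cvec (fflip n z)).
    by apply: contra nn' => /(in_interval_uniq hz')/eqP.
  have hwn : ~~ in_interval n (cvec w).
    by apply: contra nn' => /in_interval_uniq/(_ hw)/eqP.
  by rewrite normr_det2C fflip_adj_out // normr_det2C fflip_adj_out.
- exact: fflip_adj_out (wout n An).
- by rewrite normr_det2C fflip_adj_out ?zout // normr_det2C.
Qed.

(* Slope n + 1/k^2 rather than n + 1/k, which for k = 2 is the midpoint of
   (n, n+1) and hence fixed by [fflip n]. *)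
Definition witness_coord (n : nat) : int * int := (k%:Z * k%:Z * n%:Z + 1, k%:Z * k%:Z).

Lemma primitive_witness n : primitive (uncoord w0 w1 (witness_coord n)).
Proof.
rewrite -(primitive_coord det_w) uncoordK //; apply/coprimezP.
by exists (1, - n%:Z) => /=; ring.
Qed.

Lemma in_fiber_vec_witness n : in_fiber_vec (uncoord w0 w1 (witness_coord n)).
Proof.
have k0 : k%:Z%:~R = 0 :> 'Z_k by exact: pchar_Zp.
exists 1; first exact: unitr1.
by rewrite /= !(intrD, intrM) k0 w0a w0b; split; ring.
Qed.

Definition witness n : fiber := fiber_of (primitive_witness n) (in_fiber_vec_witness n).

Lemma cvec_witness n :
  cvec (witness n) = witness_coord n \/ cvec (witness n) = - witness_coord n.
Proof.
case: (vec_fiber_of (primitive_witness n) (in_fiber_vec_witness n)) => ->.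
  by rewrite uncoordK //; left.
by rewrite coordN uncoordK //; right.
Qed.

Lemma in_interval_witness n : in_interval n (cvec (witness n)).
Proof.
have k2 : 4 <= k%:Z * k%:Z by nia.
case: (cvec_witness n) => ->; rewrite ?in_intervalN /in_interval /=.
all: by apply/andP; split; nia.
Qed.

Lemma fflip_witness n : fflip n (witness n) <> witness n.
Proof.
move=> e; set x := vec (witness n).
have fx : flip n x = x \/ flip n x = - x.
  case: (vec_fflip n (witness n)); rewrite e -/x => ex; first by left.
  by right; rewrite {2}ex opprK.
have : mirror n (cvec (witness n)) = cvec (witness n) \/
       mirror n (cvec (witness n)) = - cvec (witness n).
  by rewrite -(coord_flip det_w) -coordN -/x; case: fx => ->; [left | right].
have k2 : 4 <= k%:Z * k%:Z by nia.
by move/mirror_pm_eq; case: (cvec_witness n) => -> /=; lia.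
Qed.

Theorem fiber_aut_not_enumerable :
  ~ exists e : nat -> (fiber -> fiber),
      forall f, is_fiber_aut k a b f -> exists n : nat, forall z, e n z = f z.
Proof.
case=> e he; pose A := [pred n | vec (e n (witness n)) == vec (witness n)].
have [|n en] := he (flip_on A).
  split; first exact: inv_bij (flip_onK A).
  by move=> z w; rewrite !Fk_adj_fiberE flip_on_adj.
move: (en (witness n)); case: (flip_onP A (witness n)) => [n' An' hn'|out] ew.
  have nn' := in_interval_uniq hn' (in_interval_witness n); subst n'.
  by apply: (@fflip_witness n); rewrite -ew; apply: vec_inj_pm; left; apply/eqP.
by move: (out n); rewrite inE ew eqxx in_interval_witness => /(_ isT).
Qed.

End Fiber.

Theorem proposition4p15 (k : nat) (hk : (1 < k)%N) (a b : 'Z_k)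
  (hL : admissible k a b) :
  ~ exists e : nat -> (fiber k a b -> fiber k a b),
      forall f, is_fiber_aut k a b f -> exists n : nat, forall x, e n x = f x.
Proof.
case: k hk a b hL => [|[|m]] // _ a b hL.
have [w0 [pw0 w0a w0b]] := admissible_lift hL.
have [w1 det_w] := primitive_completion pw0.
exact: fiber_aut_not_enumerable det_w w0a w0b.
Qed.
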